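(* Consider two agents with combination matrix $A=\begin{bmatrix}a&1-a\\1-a&a\end{bmatrix}$, $a\in(0,1)$, $P=0.5I_2$, $\overline{A}=(I_2+A)/2$, $V=U\Sigma^{1/2}U^{\mathsf{T}}$ where $(P-AP)/2=U\Sigma U^{\mathsf{T}}$ is an eigendecomposition, and $\mathcal{V}=V\otimes I_M$. Each agent has quadratic cost $\frac12(w^{\mathsf{T}}R_{u,k}w-2r_{du,k}^{\mathsf{T}}w)$ with $R_{u,1}=R_{u,2}=\sigma^2I_M$, and both run EXTRA with step-size $\mu^e$, initialized with $\mathcal{Y}^e_0=\mathcal{V}\mathcal{W}^e_0$. The stacked error $\widetilde{z}^e_i=[\widetilde{\mathcal{W}}^e_i;\widetilde{\mathcal{Y}}^e_i]$ then evolves as $\widetilde{z}^e_i=(Q_e\otimes I_M)\widetilde{z}^e_{i-1}$ with $Q_e=\begin{bmatrix}\overline{A}-\mu^e\sigma^2I_2 & -2V\\ V(\overline{A}-\mu^e\sigma^2I_2) & \overline{A}\end{bmatrix}$. If $\mu^e$ is chosen such that $\mu^e\sigma^2\ge a+1$, then $\widetilde{z}^e_i$ generated by EXTRA diverges.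
   Context: Contrasts with exact diffusion in the same two-agent setting, which is stable for $0<\mu\sigma^2<2$; since $1+a<2$, exact diffusion has a larger stability range. *)

(* matrices over an abstract R : realType;
   Kronecker product = tensmx (A *t B) from mathcomp-real-closed's mxtens. *)
From HB Require Import structures.
From mathcomp Require Import all_boot all_order all_algebra.
From mathcomp Require Import reals.
From mathcomp.real_closed Require Export mxtens.
Set Implicit Arguments. Unset Strict Implicit. Unset Printing Implicit Defensive.
Import Order.TTheory GRing.Theory Num.Theory.
Local Open Scope ring_scope.

Section Defs.
Variable R : realType.

Definition Amat (a : R) : 'M[R]_2 :=
  \matrix_(i < 2, j < 2) (if i == j then a else 1 - a).

Definition Pmat : 'M[R]_2 := (2^-1 : R)%:M.

Definition Abar (a : R) : 'M[R]_2 := 2^-1 *: (1%:M + Amat a).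

Definition PAP (a : R) : 'M[R]_2 := 2^-1 *: (Pmat - Amat a *m Pmat).

Definition Vmat (U Sig : 'M[R]_2) : 'M[R]_2 :=
  U *m diag_mx (\row_i Num.sqrt (Sig i i)) *m U^T.

Definition Qe (a mu sigma : R) (V : 'M[R]_2) : 'M[R]_(2 + 2) :=
  block_mx (Abar a - (mu * sigma ^+ 2)%:M) (- (2 : R) *: V)
           (V *m (Abar a - (mu * sigma ^+ 2)%:M)) (Abar a).

Definition extra_err (M : nat) (Q : 'M[R]_(2 + 2)) (z0 : 'cV[R]_((2 + 2) * M))
  (i : nat) : 'cV[R]_((2 + 2) * M) :=
  iter i (fun z => (Q *t (1%:M : 'M[R]_M)) *m z) z0.

Definition stack (M : nat) (W Y : 'cV[R]_(2 * M)) : 'cV[R]_((2 + 2) * M) :=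
  castmx (esym (mulnDl 2 2 M), erefl) (col_mx W Y).

Definition diverges (n : nat) (z : nat -> 'cV[R]_n) : Prop :=
  forall B : R, exists i (k : 'I_n), B < `|z i k 0|.

End Defs.

From HB Require Import structures.
From mathcomp Require Import all_boot all_order all_algebra.
From mathcomp Require Import reals.
From mathcomp Require Import ring lra zify.
Import Order.TTheory GRing.Theory Num.Theory.
Local Open Scope ring_scope.

(* The vector e = (1, -1) is an eigenvector of Abar (eigenvalue a) and of (P - AP)/2
   (eigenvalue (1 - a)/2), and V^2 = (P - AP)/2.  Hence the plane spanned by [e; 0] and
   [0; V e] is invariant under Q_e, which acts on it by [[a - c, -(1 - a)], [a - c, a]],
   c = mu sigma^2.  The characteristic polynomial l^2 + (c - 2a) l + (a - c) of this block
   is negative at -1 as soon as c >= a + 1, so it has a real root l < -1; started along the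
   corresponding eigenvector tensored with the all-ones vector, the EXTRA error grows like
   |l|^i. *)

Lemma col_mx_tens {R : pzRingType} m1 m2 n p q
    (A : 'M[R]_(m1, n)) (B : 'M[R]_(m2, n)) (C : 'M[R]_(p, q)) :
  col_mx A B *t C = castmx (esym (mulnDl _ _ _), erefl) (col_mx (A *t C) (B *t C)).
Proof.
apply/matrixP=> i j.
case: (mxtens_indexP i)=> i0 i1; case: (mxtens_indexP j)=> j0 j1.
rewrite tensmxE castmxE /= cast_ord_id esymK mxE [col_mx (A *t C) _ _ _]mxE.
set s := cast_ord _ _; case: (splitP i0)=> i0' /= hi0'; case: (splitP s)=> k /= hk;
  case: (mxtens_indexP k) hk=> k0 k1 /=; rewrite tensmxE.
- rewrite hi0' => /(f_equal (edivn^~ p)); rewrite !edivn_eq // => -[h0 h1].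
  by congr (A _ _ * C _ _); apply: val_inj; rewrite /= ?h0 ?h1.
- move: (ltn_ord i0') (ltn_ord i1); rewrite hi0'; nia.
- move: (ltn_ord k0) (ltn_ord k1); rewrite hi0'; nia.
- rewrite hi0' mulnDl -addnA => /addnI /(f_equal (edivn^~ p)).
  rewrite !edivn_eq // => -[h0 h1].
  by congr (B _ _ * C _ _); apply: val_inj; rewrite /= ?h0 ?h1.
Qed.

Lemma tensmxZl {R : comPzRingType} m n p q (c : R) (A : 'M[R]_(m, n)) (B : 'M[R]_(p, q)) :
  (c *: A) *t B = c *: (A *t B).
Proof. by apply/matrixP=> i j; rewrite !mxE mulrA. Qed.

Lemma ler1Dn_expr {R : numDomainType} (d : R) n : 0 <= d -> 1 + d *+ n <= (1 + d) ^+ n.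
Proof.
move=> d_ge0; elim: n => [|n IHn]; first by rewrite expr0 mulr0n addr0.
rewrite exprS; apply: le_trans (ler_wpM2l _ IHn); last by rewrite addr_ge0.
have -> : (1 + d) * (1 + d *+ n) = 1 + d *+ n.+1 + d * d *+ n by rewrite mulrS; ring.
by rewrite lerDl mulrn_wge0 // mulr_ge0.
Qed.

Lemma exists_expr_gt {R : archiRealFieldType} (B l : R) : 1 < l -> exists n, B < l ^+ n.
Proof.
move=> l_gt1; set d := l - 1; have d_gt0 : 0 < d by rewrite subr_gt0.
set n := Num.Def.archi_bound (`|B| / d); exists n.
have : `|B| / d < n%:R by apply: archi_boundP; rewrite divr_ge0 // ltW.
rewrite ltr_pdivrMr // => Bd_lt.
have := ler1Dn_expr d n (ltW d_gt0); rewrite [1 + d]addrC subrK -mulr_natr.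
have := ler_norm B; lra.
Qed.

Lemma diverges_geometric {R : realType} {n : nat} (z : nat -> 'cV[R]_n) (k : 'I_n) (l c : R) :
  1 < `|l| -> c != 0 -> (forall i, z i k 0 = l ^+ i * c) -> diverges z.
Proof.
move=> l_gt1 c_neq0 zE B; have c_gt0 : 0 < `|c| by rewrite normr_gt0.
have [i Bi] := exists_expr_gt (B / `|c|) _ l_gt1.
by exists i, k; rewrite zE normrM normrX -ltr_pdivrMr.
Qed.

Lemma extra_err_eigen {R : realType} {M : nat} {Q : 'M[R]_(2 + 2)} {z : 'cV[R]_(2 + 2)}
    (x : 'cV[R]_M) {l : R} :
  Q *m z = l *: z -> forall i, extra_err Q (z *t x) i = l ^+ i *: (z *t x).
Proof.
move=> Qz; elim=> [|i IHi]; first by rewrite expr0 scale1r.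
rewrite /extra_err iterS -/(extra_err _ _ i) IHi -scalemxAr (tensmx_mul Q 1%:M z x).
by rewrite mul1mx Qz tensmxZl scalerA exprS mulrC.
Qed.

Lemma quadratic_root_lt {R : rcfType} (p q x0 : R) :
  x0 ^+ 2 + p * x0 + q < 0 -> exists2 l, l < x0 & l ^+ 2 + p * l + q = 0.
Proof.
move=> neg_x0; set D := p ^+ 2 - 4 * q.
have D_gt : (p + 2 * x0) ^+ 2 < D.
  have -> : (p + 2 * x0) ^+ 2 = D + 4 * (x0 ^+ 2 + p * x0 + q) by rewrite /D; ring.
  lra.
have D_ge0 : 0 <= D by apply: le_trans (ltW D_gt); apply: sqr_ge0.
set s := Num.sqrt D; have s_sqr : s ^+ 2 = D by rewrite sqr_sqrtr.
have s_gt : `|p + 2 * x0| < s by rewrite -sqrtr_sqr ltr_sqrt // (le_lt_trans _ D_gt) ?sqr_ge0.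
exists ((- p - s) / 2).
  by move: s_gt; rewrite ltr_norml => /andP[? _]; lra.
have -> : ((- p - s) / 2) ^+ 2 + p * ((- p - s) / 2) + q = (s ^+ 2 - D) / 4.
  by rewrite /D; field.
by rewrite s_sqr subrr mul0r.
Qed.

Section TwoAgents.
Context {R : realType}.

Definition dvec : 'cV[R]_2 := \col_i (-1) ^+ i.

Lemma dvec_tr_dvec : dvec^T *m dvec = 2%:M.
Proof. by apply/matrixP=> i j; rewrite !ord1 !mxE !big_ord_recr big_ord0 /= !mxE; ring. Qed.

Lemma Vmat_sqr (U Sig : 'M[R]_2) :
  U^T *m U = 1%:M -> is_diag_mx Sig -> (forall i, 0 <= Sig i i) ->
  Vmat U Sig *m Vmat U Sig = U *m Sig *m U^T.
Proof.
move=> UtU /is_diag_mxP Sig_diag Sig_ge0.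
rewrite /Vmat !mulmxA -[_ *m U^T *m U]mulmxA UtU mulmx1 -[U *m _ *m _]mulmxA mulmx_diag.
congr (_ *m _ *m _); apply/matrixP=> i j; rewrite !mxE.
have [<-|ij] := eqVneq i j; first by rewrite mulr1n -expr2 sqr_sqrtr.
by rewrite mulr0n Sig_diag.
Qed.

Variable a : R.

Lemma PAPE : PAP a = ((1 - a) / 4) *: (dvec *m dvec^T).
Proof.
rewrite /PAP /Pmat mul_mx_scalar; apply/matrixP=> i j.
rewrite !mxE big_ord1 !mxE.
by case: i => [[|[|//]] ?]; case: j => [[|[|//]] ?]; rewrite /= ?mulr1n ?mulr0n; field.
Qed.

Lemma Abar_PAP : Abar a = 1%:M - 2 *: PAP a.
Proof.
apply/matrixP=> i j; rewrite /Abar /PAP /Pmat mul_mx_scalar !mxE.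
by case: i => [[|[|//]] ?]; case: j => [[|[|//]] ?]; rewrite /= ?mulr1n ?mulr0n; field.
Qed.

Lemma PAP_dvec : PAP a *m dvec = ((1 - a) / 2) *: dvec.
Proof.
rewrite PAPE -scalemxAl -mulmxA dvec_tr_dvec mul_mx_scalar scalerA.
by congr (_ *: _); field.
Qed.

Lemma Abar_dvec : Abar a *m dvec = a *: dvec.
Proof.
rewrite Abar_PAP mulmxBl mul1mx -scalemxAl PAP_dvec scalerA -[X in X - _]scale1r -scalerBl.
by congr (_ *: _); field.
Qed.

Lemma PAP_spectrum_ge0 (U Sig : 'M[R]_2) :
  a <= 1 -> U^T *m U = 1%:M -> PAP a = U *m Sig *m U^T -> forall i, 0 <= Sig i i.
Proof.
move=> a_le1 UtU PAP_USU i.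
have -> : Sig = U^T *m PAP a *m U.
  by rewrite PAP_USU !mulmxA UtU mul1mx -!mulmxA UtU mulmx1.
set w := dvec^T *m U.
have -> : U^T *m PAP a *m U = ((1 - a) / 4) *: (w^T *m w).
  by rewrite PAPE -scalemxAr -scalemxAl trmx_mul trmxK !mulmxA.
rewrite !mxE big_ord1 !mxE -expr2.
by apply: mulr_ge0; [apply: divr_ge0; lra | apply: sqr_ge0].
Qed.

Lemma Vmat_sqr_PAP (U Sig : 'M[R]_2) :
  a <= 1 -> U^T *m U = 1%:M -> is_diag_mx Sig -> PAP a = U *m Sig *m U^T ->
  Vmat U Sig *m Vmat U Sig = PAP a.
Proof.
move=> a_le1 UtU Sig_diag PAP_USU.
by rewrite PAP_USU Vmat_sqr //; exact: PAP_spectrum_ge0 PAP_USU.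
Qed.

Section ExtraIteration.
Variables (mu sigma : R) (V : 'M[R]_2).
Hypothesis V_sqr : V *m V = PAP a.
Let c := mu * sigma ^+ 2.

Lemma V_Vdvec : V *m (V *m dvec) = ((1 - a) / 2) *: dvec.
Proof. by rewrite mulmxA V_sqr PAP_dvec. Qed.

Lemma Abar_Vdvec : Abar a *m (V *m dvec) = a *: (V *m dvec).
Proof.
rewrite Abar_PAP -V_sqr mulmxBl mul1mx -scalemxAl -mulmxA V_Vdvec -scalemxAr scalerA.
by rewrite -[X in X - _]scale1r -scalerBl; congr (_ *: _); field.
Qed.

Lemma Qe_mul_dvec (al be : R) :
  Qe a mu sigma V *m col_mx (al *: dvec) (be *: (V *m dvec)) =
  col_mx (((a - c) * al - (1 - a) * be) *: dvec) (((a - c) * al + a * be) *: (V *m dvec)).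
Proof.
rewrite /Qe mul_block_col -mulmxA !mulmxBl !mul_scalar_mx -!scalemxAr Abar_dvec Abar_Vdvec.
rewrite -scalemxAl V_Vdvec mulmxBr -!scalemxAr !scalerA -!scalerBl -!scalerDl.
by congr col_mx; congr (_ *: _); rewrite /c; field.
Qed.

Definition qvec (l : R) : 'cV[R]_(2 + 2) :=
  col_mx ((1 - a) *: dvec) ((a - c - l) *: (V *m dvec)).

Lemma Qe_qvec (l : R) :
  l ^+ 2 + (c - 2 * a) * l + (a - c) = 0 -> Qe a mu sigma V *m qvec l = l *: qvec l.
Proof.
move=> l_root; rewrite Qe_mul_dvec scale_col_mx !scalerA.
congr col_mx; congr (_ *: _); first by ring.
by apply/eqP; rewrite -subr_eq0 -l_root; apply/eqP; ring.
Qed.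

End ExtraIteration.
End TwoAgents.

Theorem lemma7 (R : realType) (M : nat) (a sigma mu : R) (U Sig : 'M[R]_2) :
  (0 < M)%N -> 0 < a < 1 -> 0 < sigma -> 0 < mu ->
  U^T *m U = 1%:M -> is_diag_mx Sig -> PAP a = U *m Sig *m U^T ->
  a + 1 <= mu * sigma ^+ 2 ->
  let V := Vmat U Sig in
  let Vcal := V *t (1%:M : 'M[R]_M) in
  exists (W0 Y0 : 'cV[R]_(2 * M)),
    diverges (extra_err (Qe a mu sigma V) (stack W0 (Vcal *m Y0))).
Proof.
move=> M_gt0 /andP[a_gt0 a_lt1] _ _ UtU Sig_diag PAP_USU c_ge V Vcal.
have V_sqr : V *m V = PAP a by apply: Vmat_sqr_PAP; rewrite ?ltW.
set c := mu * sigma ^+ 2 in c_ge.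
have [l l_lt root] : exists2 l, l < -1 & l ^+ 2 + (c - 2 * a) * l + (a - c) = 0.
  by apply: quadratic_root_lt; rewrite expr2; lra.
pose x : 'cV[R]_M := const_mx 1.
exists (((1 - a) *: dvec) *t x), (((a - c - l) *: dvec) *t x).
have -> : stack (((1 - a) *: dvec) *t x) (Vcal *m (((a - c - l) *: dvec) *t x))
          = qvec a mu sigma V l *t x.
  by rewrite (tensmx_mul V 1%:M) mul1mx -scalemxAr col_mx_tens.
pose k : 'I_((2 + 2) * M) := mxtens_index (lshift 2 (ord0 : 'I_2), Ordinal M_gt0).
apply: (diverges_geometric _ k l (1 - a)).
- by rewrite ltr0_norm; lra.
- by rewrite subr_eq0 gt_eqF.
have qvec_eigen : Qe a mu sigma V *m qvec a mu sigma V l = l *: qvec a mu sigma V l.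
  exact: Qe_qvec.
move=> i; rewrite (extra_err_eigen x qvec_eigen) mxE [(_ *t _) _ _]mxE mxtens_indexK /=.
by rewrite col_mxEu !mxE expr0 !mulr1.
Qed.
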